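(* Let $Q$ be a right Leibniz algebra over a field $\mathbb{F}$ and let $L$ be a subalgebra of $Q$. Then $Q$ is an algebra of quotients of $L$ if and only if $Q$ is ideally absorbed into $L$.
   Context: A right Leibniz algebra is a vector space with a bilinear bracket satisfying $[x,[y,z]]=[[x,y],z]-[[x,z],y]$ for all $x,y,z$. An ideal $I$ of $L$ is a subspace with $[I,L]\subseteq I$ and $[L,I]\subseteq I$. For $H\subseteq L$, $\mathrm{Ann}_L(H)=\{x\in L: [x,y]=[y,x]=0\ \forall y\in H\}$. For $x\in L$ let $R_x,L_x$ be the operators on $Q$ given by $R_x(u)=[u,x]$, $L_x(u)=[x,u]$, and let $\mathscr{A}(L)$ be the associative algebra (under composition) generated by $\{R_x,L_y: x,y\in L\}$. For $q\in Q$ put ${}_L(q)=\mathbb{F}q+\{\sum_{i=1}^n\xi_i(q): \xi_i\in\mathscr{A}(L), n\in\mathbb{N}\}$ and $(L:q)=\{x\in L: [x,{}_L(q)]\subseteq L,\ [{}_L(q),x]\subseteq L\}$. $Q$ is an algebra of quotients of $L$ if for all $p,q\in Q$ with $p\neq 0$ there exists $x\in(L:q)$ with $[x,p]\neq 0$, or there exists $y\in (L:q)$ with $[p,y]\neq0$. $Q$ is ideally absorbed into $L$ if for each $0\neq q\in Q$ there exists an ideal $I$ of $L$ with $\mathrm{Ann}_L(I)=\{0\}$ such that $[I,q]\neq\{0\}$ or $[q,I]\neq\{0\}$, and both $[I,q]\subseteq L$ and $[q,I]\subseteq L$. *)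

From mathcomp Require Import all_boot all_order all_algebra.
Set Implicit Arguments. Unset Strict Implicit. Unset Printing Implicit Defensive.
Import GRing.Theory.
Local Open Scope ring_scope.

Section LeibnizDefs.
Variables (F : fieldType) (V : lmodType F) (br : V -> V -> V).

Definition right_leibniz_algebra : Prop :=
  (forall (a : F) (x y z : V), br (a *: x + y) z = a *: br x z + br y z) /\
  (forall (a : F) (x y z : V), br z (a *: x + y) = a *: br z x + br z y) /\
  (forall x y z : V, br x (br y z) = br (br x y) z - br (br x z) y).

Definition subspace (S : V -> Prop) : Prop :=
  S 0 /\ forall (a : F) (x y : V), S x -> S y -> S (a *: x + y).

Definition subalgebra (L : V -> Prop) : Prop :=
  subspace L /\ forall x y, L x -> L y -> L (br x y).

(* The associative algebra A(L) (under composition) generated by the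
   operators R_x = (u |-> [u,x]) and L_y = (u |-> [y,u]), x, y in L. *)
Inductive in_AL (L : V -> Prop) : (V -> V) -> Prop :=
| AL_R x : L x -> in_AL L (fun u => br u x)
| AL_L y : L y -> in_AL L (fun u => br y u)
| AL_comp f g : in_AL L f -> in_AL L g -> in_AL L (fun u => f (g u))
| AL_add f g : in_AL L f -> in_AL L g -> in_AL L (fun u => f u + g u)
| AL_scale (a : F) f : in_AL L f -> in_AL L (fun u => a *: f u).

Definition gen_L (L : V -> Prop) (q : V) : V -> Prop :=
  fun v => exists (a : F) (n : nat) (xi : 'I_n -> V -> V),
    (forall i, in_AL L (xi i)) /\ v = a *: q + \sum_(i < n) xi i q.

Definition colon (L : V -> Prop) (q : V) : V -> Prop :=
  fun x => L x /\ forall v, gen_L L q v -> L (br x v) /\ L (br v x).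

Definition algebra_of_quotients (L : V -> Prop) : Prop :=
  forall p q : V, p <> 0 ->
    (exists x, colon L q x /\ br x p <> 0) \/
    (exists y, colon L q y /\ br p y <> 0).

Definition ideal_of (L I : V -> Prop) : Prop :=
  subspace I /\ (forall x, I x -> L x) /\
  (forall x y, I x -> L y -> I (br x y)) /\
  (forall x y, I x -> L y -> I (br y x)).

Definition Ann (L H : V -> Prop) : V -> Prop :=
  fun x => L x /\ forall y, H y -> br x y = 0 /\ br y x = 0.

Definition ideally_absorbed (L : V -> Prop) : Prop :=
  forall q : V, q <> 0 ->
    exists I : V -> Prop,
      ideal_of L I /\
      (forall x, Ann L I x <-> x = 0) /\
      ((exists x, I x /\ br x q <> 0) \/ (exists x, I x /\ br q x <> 0)) /\
      (forall x, I x -> L (br x q) /\ L (br q x)).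

End LeibnizDefs.

From mathcomp Require Import all_boot all_order all_algebra.
From Stdlib Require Import Classical.
Set Implicit Arguments. Unset Strict Implicit. Unset Printing Implicit Defensive.
Import GRing.Theory.
Local Open Scope ring_scope.

(* Both directions rest on the same observation about an ideal S of L: the set
   of v with [S,v] and [v,S] inside L is a subspace stable under A(L), by the
   Leibniz identity.  Hence S absorbs q into L iff S is contained in (L : q).
   (=>) (L : q) is an ideal, and (L : q) having zero annihilator and not
   annihilating q are exactly what the quotient condition asserts for p ranging
   over Ann_L(L : q) and for p = q.
   (<=) Take an ideal J with zero annihilator moving p into L, and an ideal S
   with zero annihilator absorbing q (J itself if q = 0), so S is inside
   (L : q).  If no element of (L : q) moves p, then S annihilates p, and the
   Leibniz identity puts the nonzero elements [j,p] or [p,j] (j in J) into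
   Ann_L(S) = 0. *)

Section RightLeibnizAlgebra.
Variables (F : fieldType) (V : lmodType F) (br : V -> V -> V).
Hypothesis brL : right_leibniz_algebra br.

Definition absorbs (L S : V -> Prop) (v : V) : Prop :=
  forall y, S y -> L (br y v) /\ L (br v y).

Lemma brDl x y z : br (x + y) z = br x z + br y z.
Proof. by have := brL.1 1 x y z; rewrite !scale1r. Qed.

Lemma brDr x y z : br z (x + y) = br z x + br z y.
Proof. by have := brL.2.1 1 x y z; rewrite !scale1r. Qed.

Lemma br0l z : br 0 z = 0.
Proof. by apply: (@addrI _ (br 0 z)); rewrite -brDl !addr0. Qed.

Lemma br0r z : br z 0 = 0.
Proof. by apply: (@addrI _ (br z 0)); rewrite -brDr !addr0. Qed.

Lemma brZl a x z : br (a *: x) z = a *: br x z.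
Proof. by have := brL.1 a x 0 z; rewrite !addr0 br0l addr0. Qed.

Lemma brZr a x z : br z (a *: x) = a *: br z x.
Proof. by have := brL.2.1 a x 0 z; rewrite !addr0 br0r addr0. Qed.

Lemma leibniz x y z : br x (br y z) = br (br x y) z - br (br x z) y.
Proof. exact: brL.2.2. Qed.

Lemma leibniz_l x y z : br (br x y) z = br x (br y z) + br (br x z) y.
Proof. by rewrite leibniz subrK. Qed.

Section Subalgebra.
Variable L : V -> Prop.
Hypothesis Lsub : subalgebra br L.

Lemma subalg0 : L 0. Proof. exact: Lsub.1.1. Qed.

Lemma subalgZD a x y : L x -> L y -> L (a *: x + y).
Proof. exact: Lsub.1.2. Qed.

Lemma subalgD x y : L x -> L y -> L (x + y).
Proof. by move=> Lx Ly; have := subalgZD 1 Lx Ly; rewrite scale1r. Qed.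

Lemma subalgB x y : L x -> L y -> L (x - y).
Proof.
by move=> Lx Ly; have := subalgZD (-1) Ly Lx; rewrite scaleN1r addrC.
Qed.

Lemma subalg_br x y : L x -> L y -> L (br x y). Proof. exact: Lsub.2. Qed.

Lemma Ann0 I : Ann br L I 0.
Proof. by split=> [|y _]; [exact: subalg0 | rewrite br0l br0r]. Qed.

Section AbsorbingIdeal.
Variable S : V -> Prop.
Hypothesis Sideal : ideal_of br L S.

Lemma absorbs0 : absorbs L S 0.
Proof. by move=> y _; rewrite br0l br0r; split; apply: subalg0. Qed.

Lemma absorbsZD a x w :
  absorbs L S x -> absorbs L S w -> absorbs L S (a *: x + w).
Proof.
move=> Sx Sw y Sy; have [Lyx Lxy] := Sx y Sy; have [Lyw Lwy] := Sw y Sy.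
by rewrite brDr brZr brDl brZl; split; apply: subalgZD.
Qed.

Lemma absorbsD x w :
  absorbs L S x -> absorbs L S w -> absorbs L S (x + w).
Proof. by move=> Sx Sw; have := absorbsZD 1 Sx Sw; rewrite scale1r. Qed.

Lemma absorbsZ a x : absorbs L S x -> absorbs L S (a *: x).
Proof. by move=> Sx; have := absorbsZD a Sx absorbs0; rewrite addr0. Qed.

Lemma absorbs_br x v :
  L x -> absorbs L S v ->
  absorbs L S (br v x) /\ absorbs L S (br x v).
Proof.
have [_ [_ [Sr Sl]]] := Sideal.
move=> Lx Sv; split=> y Sy; have [Lyv Lvy] := Sv y Sy.
- split; [rewrite leibniz | rewrite leibniz_l].
  + by apply: subalgB; [exact: subalg_br | have [] := Sv _ (Sr _ _ Sy Lx)].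
  + by apply: subalgD; [have [] := Sv _ (Sl _ _ Sy Lx) | exact: subalg_br].
- split; [rewrite leibniz | rewrite leibniz_l].
  + by apply: subalgB; [have [] := Sv _ (Sr _ _ Sy Lx) | exact: subalg_br].
  + by apply: subalgD; [exact: subalg_br | have [] := Sv _ (Sl _ _ Sy Lx)].
Qed.

Lemma absorbs_AL f v : in_AL br L f -> absorbs L S v -> absorbs L S (f v).
Proof.
move=> ALf; elim: ALf v => {f}
  [x Lx|x Lx|f g _ IHf _ IHg|f g _ IHf _ IHg|a f _ IHf] v Sv.
- exact: (absorbs_br Lx Sv).1.
- exact: (absorbs_br Lx Sv).2.
- exact/IHf/IHg.
- exact: absorbsD (IHf _ Sv) (IHg _ Sv).
- exact/absorbsZ/IHf.
Qed.

Lemma absorbs_gen_L q v :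
  absorbs L S q -> gen_L br L q v -> absorbs L S v.
Proof.
move=> Sq [a [n [xi [ALxi ->]]]]; apply: absorbsZD => //.
by apply: (big_ind _ absorbs0 absorbsD) => i _; apply: absorbs_AL.
Qed.

Lemma ideal_sub_colon q y : absorbs L S q -> S y -> colon br L q y.
Proof.
move=> Sq Sy; split=> [|v gen_v]; first exact: Sideal.2.1.
exact: absorbs_gen_L Sq gen_v y Sy.
Qed.

Lemma Ann_brl p j :
  (forall y, S y -> br y p = 0 /\ br p y = 0) -> L j -> L (br j p) ->
  Ann br L S (br j p).
Proof.
have [_ [_ [Sr Sl]]] := Sideal.
move=> Sp Lj Ljp; split=> // y Sy.
rewrite leibniz leibniz_l (Sp _ Sy).1 (Sp _ Sy).2 (Sp _ (Sr _ _ Sy Lj)).1.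
by rewrite (Sp _ (Sl _ _ Sy Lj)).1 br0l br0r subr0 addr0.
Qed.

Lemma Ann_brr p j :
  (forall y, S y -> br y p = 0 /\ br p y = 0) -> L j -> L (br p j) ->
  Ann br L S (br p j).
Proof.
have [_ [_ [Sr Sl]]] := Sideal.
move=> Sp Lj Lpj; split=> // y Sy.
rewrite leibniz leibniz_l (Sp _ Sy).1 (Sp _ Sy).2 (Sp _ (Sr _ _ Sy Lj)).1.
by rewrite (Sp _ (Sl _ _ Sy Lj)).2 br0l subr0 addr0.
Qed.

End AbsorbingIdeal.

Lemma idealizer_ideal (W : V -> Prop) :
  (forall a w, L a -> W w -> W (br a w) /\ W (br w a)) ->
  ideal_of br L (fun x => L x /\ forall w, W w -> L (br x w) /\ L (br w x)).
Proof.
move=> Wstable; split; [split|split=> [x []//|]].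
- split=> [|w _]; first exact: subalg0.
  by rewrite br0l br0r; split; apply: subalg0.
- move=> a x y [Lx Wx] [Ly Wy]; split=> [|w Ww]; first exact: subalgZD.
  have [Lxw Lwx] := Wx w Ww; have [Lyw Lwy] := Wy w Ww.
  by rewrite brDl brZl brDr brZr; split; apply: subalgZD.
split=> x a [Lx Wx] La; (split=> [|w Ww]; first exact: subalg_br);
  have [Law Lwa] := Wstable a w La Ww; have [Lxw Lwx] := Wx w Ww;
  (split; [rewrite leibniz_l | rewrite leibniz]).
- by apply: subalgD; [have [] := Wx _ Law | exact: subalg_br].
- by apply: subalgB; [exact: subalg_br | have [] := Wx _ Lwa].
- by apply: subalgD; [exact: subalg_br | have [] := Wx _ Law].
- by apply: subalgB; [have [] := Wx _ Lwa | exact: subalg_br].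
Qed.

(* The zero map lies in A(L) only up to extensionality, as [0 *: R_0]. *)
Lemma in_AL_sum n (xi : 'I_n -> V -> V) :
  (forall i, in_AL br L (xi i)) ->
  exists2 f, in_AL br L f & forall u, \sum_(i < n) xi i u = f u.
Proof.
elim: n xi => [|n IHn] xi ALxi.
  exists (fun u => 0 *: br u 0) => [|u]; last by rewrite big_ord0 scale0r.
  exact/AL_scale/AL_R/subalg0.
have [f ALf sumE] :=
  IHn (fun i => xi (widen_ord (leqnSn n) i)) (fun i => ALxi _).
exists (fun u => f u + xi ord_max u) => [|u]; first exact: AL_add.
by rewrite big_ord_recr sumE.
Qed.

Lemma gen_LE q v :
  gen_L br L q v <-> exists a f, in_AL br L f /\ v = a *: q + f q.
Proof.
split=> [[a [n [xi [ALxi ->]]]] | [a [f [ALf ->]]]].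
  by have [f ALf sumE] := in_AL_sum ALxi; exists a, f; rewrite sumE.
by exists a, 1%N, (fun _ => f); rewrite big_ord1.
Qed.

Lemma gen_L_self q : gen_L br L q q.
Proof.
exists 1, 0%N, (fun _ => id); split=> [[] // | ].
by rewrite big_ord0 addr0 scale1r.
Qed.

Lemma gen_L_br q a v :
  L a -> gen_L br L q v -> gen_L br L q (br a v) /\ gen_L br L q (br v a).
Proof.
move=> La /gen_LE [b [f [ALf ->]]]; split; apply/gen_LE; exists 0.
- exists (fun u => b *: br a u + br a (f u)); rewrite scale0r add0r brDr brZr.
  split=> //; apply: AL_add; first exact/AL_scale/AL_L.
  exact: AL_comp (AL_L _ La) ALf.
- exists (fun u => b *: br u a + br (f u) a); rewrite scale0r add0r brDl brZl.
  split=> //; apply: AL_add; first exact/AL_scale/AL_R.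
  exact: AL_comp (AL_R _ La) ALf.
Qed.

Lemma colon_ideal q : ideal_of br L (colon br L q).
Proof. exact/idealizer_ideal/gen_L_br. Qed.

Lemma quotients_ideally_absorbed :
  algebra_of_quotients br L -> ideally_absorbed br L.
Proof.
move=> quotL q q0; exists (colon br L q); split; first exact: colon_ideal.
split; [|split; first exact: quotL].
- move=> x; split=> [[_ Ann_x] | ->]; last exact: Ann0.
  have [// | /eqP x0] := eqVneq x 0.
  by case: (quotL x q x0) => -[y [/Ann_x [xy0 yx0]]]; rewrite ?xy0 ?yx0.
- by move=> x [_ /(_ q (gen_L_self q))].
Qed.

Lemma ideally_absorbed_quotients :
  ideally_absorbed br L -> algebra_of_quotients br L.
Proof.
move=> absL p q p0.
have [J [Jideal [JAnn [Jp JpL]]]] := absL p p0.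
have [S Sideal [SAnn Sq]] : exists2 S, ideal_of br L S &
    (forall x, Ann br L S x <-> x = 0) /\ absorbs L S q.
  have [-> | /eqP q0] := eqVneq q 0.
    by exists J => //; split=> //; apply: absorbs0.
  by have [I [Iideal [IAnn [_ Iq]]]] := absL q q0; exists I.
apply: NNPP => not_quot.
have Sp y : S y -> br y p = 0 /\ br p y = 0.
  move=> Sy; have Sy_colon := ideal_sub_colon Sideal Sq Sy.
  by split; apply: NNPP => ne; apply: not_quot; [left|right]; exists y.
have Lj j : J j -> L j by apply: Jideal.2.1.
case: Jp => -[j [Jj ne]]; apply: ne; apply/SAnn.
- by apply: Ann_brl (Lj _ Jj) (JpL _ Jj).1.
- by apply: Ann_brr (Lj _ Jj) (JpL _ Jj).2.
Qed.

End Subalgebra.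
End RightLeibnizAlgebra.

Theorem theorem3p10 (F : fieldType) (V : lmodType F) (br : V -> V -> V)
  (L : V -> Prop) :
  right_leibniz_algebra br -> subalgebra br L ->
  (algebra_of_quotients br L <-> ideally_absorbed br L).
Proof.
move=> brL Lsub; split.
- exact: quotients_ideally_absorbed.
- exact: ideally_absorbed_quotients.
Qed.
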